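(* Let $I\subseteq\mathbb{R}$ be an interval, let $f:I\to\mathbb{R}$ be differentiable on the interior $I^{\circ}$ of $I$, let $a,b\in I^{\circ}$ with $a<b$, assume $f'\in L[a,b]$, and let $\alpha,\lambda\in[0,1]$. Suppose that $|f'|^{q}$ is $s$-convex on $[a,b]$ for some fixed $s\in(0,1]$ and some $q\geq 1$. Define $$I_f(\lambda,\alpha,a,b)=\lambda\big(\alpha f(a)+(1-\alpha)f(b)\big)+(1-\lambda)f(\alpha a+(1-\alpha)b)-\frac{1}{b-a}\int_a^b f(x)\,dx,$$ $$\gamma_1(\alpha,\lambda)=(1-\alpha)\Big[\alpha\lambda-\frac{1-\alpha}{2}\Big],\qquad \gamma_2(\alpha,\lambda)=(\alpha\lambda)^2-\gamma_1(\alpha,\lambda),$$ $$c_1(\alpha,\lambda,s)=(\alpha\lambda)^{s+2}\frac{2}{(s+1)(s+2)}-\alpha\lambda\frac{(1-\alpha)^{s+1}}{s+1}+\frac{(1-\alpha)^{s+2}}{s+2},$$ $$c_2(\alpha,\lambda,s)=(1-\alpha\lambda)^{s+2}\frac{2}{(s+1)(s+2)}-\frac{(1-\alpha\lambda)(1+\alpha^{s+1})}{s+1}+\frac{1+\alpha^{s+2}}{s+2},$$ $$c_3(\alpha,\lambda,s)=\alpha\lambda\frac{(1-\alpha)^{s+1}}{s+1}-\frac{(1-\alpha)^{s+2}}{s+2},\qquad c_4(\alpha,\lambda,s)=\frac{(\alpha\lambda-1)(1-\alpha^{s+1})}{s+1}+\frac{1-\alpha^{s+2}}{s+2}.$$ Then: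 (i) if $\alpha\lambda\leq 1-\alpha\leq 1-\lambda(1-\alpha)$, $$|I_f(\lambda,\alpha,a,b)|\leq (b-a)\Big[\gamma_2^{1-\frac1q}(\alpha,\lambda)\big(c_1(\alpha,\lambda,s)|f'(b)|^q+c_2(\alpha,\lambda,s)|f'(a)|^q\big)^{\frac1q}+\gamma_2^{1-\frac1q}(1-\alpha,\lambda)\big(c_2(1-\alpha,\lambda,s)|f'(b)|^q+c_1(1-\alpha,\lambda,s)|f'(a)|^q\big)^{\frac1q}\Big];$$ (ii) if $\alpha\lambda\leq 1-\lambda(1-\alpha)\leq 1-\alpha$, $$|I_f(\lambda,\alpha,a,b)|\leq (b-a)\Big[\gamma_2^{1-\frac1q}(\alpha,\lambda)\big(c_1(\alpha,\lambda,s)|f'(b)|^q+c_2(\alpha,\lambda,s)|f'(a)|^q\big)^{\frac1q}+\gamma_1^{1-\frac1q}(1-\alpha,\lambda)\big(c_4(1-\alpha,\lambda,s)|f'(b)|^q+c_3(1-\alpha,\lambda,s)|f'(a)|^q\big)^{\frac1q}\Big];$$ (iii) if $1-\alpha\leq\alpha\lambda\leq 1-\lambda(1-\alpha)$, $$|I_f(\lambda,\alpha,a,b)|\leq (b-a)\Big[\gamma_1^{1-\frac1q}(\alpha,\lambda)\big(c_3(\alpha,\lambda,s)|f'(b)|^q+c_4(\alpha,\lambda,s)|f'(a)|^q\big)^{\frac1q}+\gamma_2^{1-\frac1q}(1-\alpha,\lambda)\big(c_2(1-\alpha,\lambda,s)|f'(b)|^q+c_1(1-\alpha,\lambda,s)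|f'(a)|^q\big)^{\frac1q}\Big].$$
   Context: For a fixed $s\in(0,1]$, a function $g:[a,b]\to[0,\infty)$ is called $s$-convex (in the second sense) on $[a,b]$ if $g(\theta x+(1-\theta)y)\leq \theta^{s}g(x)+(1-\theta)^{s}g(y)$ for all $x,y\in[a,b]$ and all $\theta\in[0,1]$. *)

From HB Require Import structures.
From mathcomp Require Import all_boot all_order all_algebra.
From mathcomp Require Import all_classical all_reals all_analysis.
Set Implicit Arguments. Unset Strict Implicit. Unset Printing Implicit Defensive.
Import Order.TTheory GRing.Theory Num.Theory.
Import numFieldNormedType.Exports.
Local Open Scope classical_set_scope.
Local Open Scope ring_scope.

(* s-convexity in the second sense of a nonnegative function g on [a,b]. *)
Definition s_convex_on {R : realType} (s a b : R) (g : R -> R) : Prop :=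
  (forall x, a <= x <= b -> 0 <= g x) /\
  (forall x y th, a <= x <= b -> a <= y <= b -> 0 <= th <= 1 ->
     g (th * x + (1 - th) * y) <= th `^ s * g x + (1 - th) `^ s * g y).

Definition I_f {R : realType} (f : R -> R) (lam al a b : R) : R :=
  lam * (al * f a + (1 - al) * f b) + (1 - lam) * f (al * a + (1 - al) * b)
  - (b - a)^-1 * Rintegral lebesgue_measure `[a, b] f.

Definition gamma1 {R : realType} (al lam : R) : R :=
  (1 - al) * (al * lam - (1 - al) / 2).
Definition gamma2 {R : realType} (al lam : R) : R :=
  (al * lam) ^+ 2 - gamma1 al lam.

Definition c1 {R : realType} (al lam s : R) : R :=
  (al * lam) `^ (s + 2) * (2 / ((s + 1) * (s + 2)))
  - al * lam * ((1 - al) `^ (s + 1) / (s + 1))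
  + (1 - al) `^ (s + 2) / (s + 2).
Definition c2 {R : realType} (al lam s : R) : R :=
  (1 - al * lam) `^ (s + 2) * (2 / ((s + 1) * (s + 2)))
  - (1 - al * lam) * (1 + al `^ (s + 1)) / (s + 1)
  + (1 + al `^ (s + 2)) / (s + 2).
Definition c3 {R : realType} (al lam s : R) : R :=
  al * lam * ((1 - al) `^ (s + 1) / (s + 1)) - (1 - al) `^ (s + 2) / (s + 2).
Definition c4 {R : realType} (al lam s : R) : R :=
  (al * lam - 1) * (1 - al `^ (s + 1)) / (s + 1) + (1 - al `^ (s + 2)) / (s + 2).

From HB Require Import structures.
From mathcomp Require Import all_boot all_order all_algebra.
From mathcomp Require Import all_classical all_reals all_analysis.
From mathcomp Require Import ring lra.
Import Order.TTheory GRing.Theory Num.Theory.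
Import numFieldNormedType.Exports.
Local Open Scope classical_set_scope.
Local Open Scope ring_scope.
Set Implicit Arguments. Unset Strict Implicit. Unset Printing Implicit Defensive.

(* Put m = al a + (1 - al) b, p = a + al lam (b - a) and r = a + (1 - (1 - al) lam) (b - a).
   Integrating by parts, (b - a) I_f is the sum of the moments \int_a^m (x - p) f'(x) dx and
   \int_m^b (x - r) f'(x) dx, each bounded by the integral of |x - k| |f'(x)|.  By s-convexity,
   |f'(a + v (b - a))|^q <= (1 - v)^s |f'(a)|^q + v^s |f'(b)|^q.  Instead of Hoelder's inequality
   we use, for every M > 0, the tangent line at M of the concave map y |-> y^(1/q): it majorizes
   |f'| by the derivative of an explicit function G_M, so G_M + f and G_M - f are nondecreasing
   and the moments of f are dominated by those of G_M.  These are computed in closed form and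
   produce gamma1, gamma2 and c1, ..., c4; minimizing the resulting bound over M gives
   gamma^(1 - 1/q) c^(1/q).  Comparing with G_M by monotonicity needs no integrability of f'. *)

Ltac neq0 := match goal with |- is_true (_ != 0) =>
  first [ rewrite gt_eqF //; lra | rewrite lt_eqF //; lra
        | rewrite gt_eqF //; nra | rewrite lt_eqF //; nra ] end.
Ltac field_nz := field; repeat (apply/andP; split); try neq0; try done.

Section PowerTangents.
Context {R : realType}.
Implicit Types r y M X G C K : R.

Lemma gt0_powRB1 M r : 0 < M -> M `^ (r - 1) = M `^ r / M.
Proof. by move=> M0; rewrite powRB ?powRr1 ?(ltW M0) ?lt0r_neq0 ?implybT. Qed.

Lemma powR_le_tangent r y M : 0 < r <= 1 -> 0 <= y -> 0 < M ->
  y `^ r <= (1 - r) * M `^ r + r * M `^ (r - 1) * y.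
Proof.
move=> /andP[r0 r1] y0 M0.
rewrite gt0_powRB1 //.
have [->|r_neq1] := eqVneq r 1.
  by rewrite subrr mul0r add0r mul1r !powRr1 ?(ltW M0) // divff ?gt_eqF // mul1r.
have r_lt1 : r < 1 by rewrite lt_neqAle r_neq1 r1.
have yM0 : 0 <= y / M by rewrite divr_ge0 // ltW.
have p0 : 0 < r^-1 by rewrite invr_gt0.
have p'0 : 0 < (1 - r)^-1 by rewrite invr_gt0 subr_gt0.
have young := conjugate_powR (powR_ge0 (y / M) r) ler01 p0 p'0
  ltac:(by rewrite !invrK addrC subrK).
rewrite -powRrM mulfV ?gt_eqF // powRr1 // powR1 mulr1 !invrK in young.
have -> : y = M * (y / M) by rewrite mulrC divfK ?gt_eqF.
rewrite powRM ?(ltW M0) // [M * _]mulrC mulrA divfK ?gt_eqF //.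
have Mr0 : 0 < M `^ r := powR_gt0 _ M0.
nra.
Qed.

Lemma le0_of_forall_le_mul X K : 0 <= K -> (forall e, 0 < e -> X <= K * e) -> X <= 0.
Proof.
move=> K0 H; rewrite leNgt; apply/negP => X0.
have := H (X / (K + 1)) (divr_gt0 X0 (ltr_wpDl K0 ltr01)).
have -> : K * (X / (K + 1)) = X - X / (K + 1) by field_nz.
have : 0 < X / (K + 1) by rewrite divr_gt0 //; lra.
lra.
Qed.

Lemma tangent_bound_at_ratio r G C : 0 < G -> 0 < C ->
  (1 - r) * (C / G) `^ r * G + r * (C / G) `^ (r - 1) * C = G `^ (1 - r) * C `^ r.
Proof.
move=> G0 C0; have CG0 : 0 < C / G by rewrite divr_gt0.
have GVr : G^-1 `^ r = (G `^ r)^-1.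
  by rewrite -powR_inv1 ?(ltW G0) // -powRrM mulN1r powRN.
have G1r : G `^ (1 - r) = G / G `^ r.
  by rewrite powRB ?powRr1 ?(ltW G0) ?lt0r_neq0 ?implybT.
rewrite gt0_powRB1 // powRM ?(ltW C0) ?invr_ge0 ?(ltW G0) // GVr G1r.
have G_r0 : 0 < G `^ r := powR_gt0 _ G0.
have C_r0 : 0 < C `^ r := powR_gt0 _ C0.
field_nz.
Qed.

Lemma le_geomean_of_tangent_bounds r X G C : 0 < r <= 1 -> 0 <= X -> 0 <= G ->
  (forall M, 0 < M -> X <= (1 - r) * M `^ r * G + r * M `^ (r - 1) * C) ->
  X <= G `^ (1 - r) * C `^ r.
Proof.
move=> /andP[r0 r1] X0 G0 H.
have [r_eq1|r_neq1] := eqVneq r 1.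
  subst r; move: (H 1 ltr01); rewrite subrr !powRr0 powR1 !mul0r add0r !mul1r => XC.
  by rewrite powRr1 // (le_trans X0 XC).
have r_lt1 : r < 1 by rewrite lt_neqAle r_neq1 r1.
have [C_lt0|C_gt0|C_eq0] := ltgtP C 0.
- pose M := - r * C / ((1 - r) * G + 1).
  have den0 : 0 < (1 - r) * G + 1 by nra.
  have M0 : 0 < M by rewrite divr_gt0 //; nra.
  have neg : (1 - r) * M * G + r * C < 0.
    have -> : (1 - r) * M * G + r * C = r * C / ((1 - r) * G + 1) by rewrite /M; field_nz.
    by rewrite pmulr_llt0 ?invr_gt0 // pmulr_rlt0.
  have := H M M0; rewrite gt0_powRB1 //.
  have -> : (1 - r) * M `^ r * G + r * (M `^ r / M) * C
          = M `^ r / M * ((1 - r) * M * G + r * C) by field_nz.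
  have : 0 < M `^ r / M by rewrite divr_gt0 // powR_gt0.
  nra.
- have [G_eq0|G_neq0] := eqVneq G 0.
  + have r1_neq0 : 1 - r != 0 by rewrite subr_eq0 eq_sym.
    rewrite G_eq0 powR0 // mul0r.
    apply: (@le0_of_forall_le_mul _ (r * C)); first nra.
    move=> e e0; have := H (e `^ (r - 1)^-1) (powR_gt0 _ e0).
    rewrite G_eq0 mulr0 add0r -powRrM mulVf ?powRr1 ?(ltW e0) //; last by rewrite subr_eq0.
    lra.
  + have G_gt0 : 0 < G by rewrite lt_neqAle eq_sym G_neq0.
    by rewrite -tangent_bound_at_ratio //; exact: H (divr_gt0 C_gt0 G_gt0).
- subst C; rewrite powR0 ?gt_eqF // mulr0.
  apply: (@le0_of_forall_le_mul _ ((1 - r) * G)); first nra.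
  move=> e e0; have := H (e `^ r^-1) (powR_gt0 _ e0).
  by rewrite mulr0 addr0 -powRrM mulVf ?gt_eqF // powRr1 ?(ltW e0) //; lra.
Qed.

End PowerTangents.

Section ClampedPower.
Context {R : realType}.
Implicit Types t v : R.

(* [powR] is junk (equal to 1) at negative numbers; clamping them to 0 makes
   [ppow t] continuous on the whole line for [t > 0]. *)
Definition ppow t v : R := Num.max v 0 `^ t.

Lemma ppowE t v : 0 <= v -> ppow t v = v `^ t.
Proof. by move=> v0; rewrite /ppow max_l. Qed.

Lemma ppow0 t : 0 < t -> ppow t 0 = 0.
Proof. by move=> t0; rewrite ppowE // powR0 // gt_eqF. Qed.

Lemma ppow1 t : ppow t 1 = 1.
Proof. by rewrite ppowE // powR1. Qed.

Lemma is_derive_ppow t v : 0 < v -> is_derive v 1 (ppow t) (t * v `^ (t - 1)).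
Proof.
move=> v0; apply: near_eq_is_derive (is_derive1_powR t v0).
by near=> w; rewrite ppowE // ltW //; near: w; exact: lt_nbhsr.
Unshelve. all: by end_near. Qed.

Lemma continuous_ppow t : 0 < t -> continuous (ppow t).
Proof.
move=> t0 v; have [v0|v0|->] := ltgtP v 0.
- apply: cvg_near_cst; near=> w.
  rewrite /ppow !max_r ?ltW //; near: w; exact: lt_nbhsl.
- apply/differentiable_continuous/derivable1_diffP.
  by have [] := is_derive_ppow t v0.
- apply/left_right_continuousP; rewrite ppow0 //; split.
  + by apply: cvg_near_cst; near=> w; rewrite /ppow max_r ?powR0 ?gt_eqF // ltW.
  + apply: (cvg_trans _ (powR_cvg0 t0)); apply: near_eq_cvg.
    by near=> w; rewrite ppowE // ltW.
Unshelve. all: by end_near. Qed.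

Lemma is_derive_ppowB1 t v : v < 1 ->
  is_derive v 1 (fun w => ppow t (1 - w)) (- (t * (1 - v) `^ (t - 1))).
Proof.
rewrite -subr_gt0 => v1.
have oneB : is_derive v 1 (fun w : R => 1 - w) (-1).
  by apply: is_derive_eq; ring.
have := @is_derive1_comp _ (ppow t) (fun w => 1 - w) v _ _ (is_derive_ppow t v1) oneB.
by rewrite mulrN1.
Qed.

Lemma continuous_ppowB1 t : 0 < t -> continuous (fun v => ppow t (1 - v)).
Proof.
move=> t0 v; apply: (@continuous_comp _ _ _ (fun w : R => 1 - w) (ppow t)).
  by apply: cvgB; [exact: cvg_cst|exact: cvg_id].
exact: continuous_ppow.
Qed.

End ClampedPower.

Section IntegrationByPartsMoment.
Context {R : realType}.
Notation mu := (@lebesgue_measure R).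
Implicit Types (psi f G F : R -> R) (c d k : R).

Lemma within_continuous_integrable psi c d :
  {within `[c, d], continuous psi} -> mu.-integrable `[c, d] (EFin \o psi).
Proof. by move=> h; apply: continuous_compact_integrable => //; exact: segment_compact. Qed.

Lemma Rintegral_itv_split psi c k d : c <= k <= d -> {within `[c, d], continuous psi} ->
  \int[mu]_(x in `[c, d]) psi x =
  \int[mu]_(x in `[c, k]) psi x + \int[mu]_(x in `[k, d]) psi x.
Proof.
move=> /andP[ck kd] /within_continuous_integrable psi_int.
have := @Rintegral_itvB R psi (BLeft c) (BRight d) k psi_int.
rewrite !bnd_simp => /(_ ck kd) split_at_k.
rewrite -(@Rintegral_itv_obnd_cbnd _ k) -?split_at_k; first by rewrite addrC subrK.
by apply: integrableS psi_int => //; apply: subset_itvr; rewrite bnd_simp.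
Qed.

Lemma lebesgue_measure_itvcc c d : c <= d -> fine (mu `[c, d]) = d - c.
Proof.
move=> cd; rewrite lebesgue_measure_itv /= lte_fin.
by case: ltP => [//|dc]; rewrite (@le_anti _ _ c d) ?cd ?subrr.
Qed.

(* For differentiable [psi] this is [\int_c^d (x - k) psi'(x) dx] integrated by parts;
   in this form it needs no integrability of [psi']. *)
Definition ibp_moment psi c d k : R :=
  (d - k) * psi d - (c - k) * psi c - \int[mu]_(x in `[c, d]) psi x.

Lemma ibp_momentD f G c d k :
  {within `[c, d], continuous G} -> {within `[c, d], continuous f} ->
  ibp_moment (fun x => G x + f x) c d k = ibp_moment G c d k + ibp_moment f c d k.
Proof.
by move=> /within_continuous_integrable ? /within_continuous_integrable ?;
  rewrite /ibp_moment RintegralD //; ring.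
Qed.

Lemma ibp_momentB f G c d k :
  {within `[c, d], continuous G} -> {within `[c, d], continuous f} ->
  ibp_moment (fun x => G x - f x) c d k = ibp_moment G c d k - ibp_moment f c d k.
Proof.
by move=> /within_continuous_integrable ? /within_continuous_integrable ?;
  rewrite /ibp_moment RintegralB //; ring.
Qed.

Lemma ibp_moment_split psi c k d : c <= k <= d -> {within `[c, d], continuous psi} ->
  ibp_moment psi c d k = ibp_moment psi c k k + ibp_moment psi k d k.
Proof. by move=> ckd h; rewrite /ibp_moment (Rintegral_itv_split ckd h); ring. Qed.

Lemma ibp_moment_ndecr psi c d k : c <= d -> {within `[c, d], continuous psi} ->
  (forall x y, c <= x -> x <= y -> y <= d -> psi x <= psi y) ->
  (k <= c -> 0 <= ibp_moment psi c d k) /\ (d <= k -> ibp_moment psi c d k <= 0).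
Proof.
move=> cd psi_cont psi_ndecr.
have psi_int := within_continuous_integrable psi_cont.
have cst_int r : mu.-integrable `[c, d] (EFin \o fun=> r).
  by apply: within_continuous_integrable; exact: cst_continuous.
have int_le : \int[mu]_(x in `[c, d]) psi x <= psi d * (d - c).
  rewrite -lebesgue_measure_itvcc // -Rintegral_cst //.
  by apply: le_Rintegral => // x; rewrite /= in_itv /= => /andP[cx xd]; exact: psi_ndecr.
have int_ge : psi c * (d - c) <= \int[mu]_(x in `[c, d]) psi x.
  rewrite -lebesgue_measure_itvcc // -Rintegral_cst //.
  by apply: le_Rintegral => // x; rewrite /= in_itv /= => /andP[cx xd]; exact: psi_ndecr.
have psi_cd : psi c <= psi d by exact: psi_ndecr.
rewrite /ibp_moment; move: int_le int_ge psi_cd.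
by move: (\int[mu]_(x in _) _) => J; split => k_bd; nra.
Qed.

Lemma derive1_val F (x df : R) : is_derive x 1 F df -> derive1 F x = df.
Proof. by move=> ?; rewrite derive1E; exact: derive_val. Qed.

Definition derive_majorant G f c d : Prop :=
  [/\ {within `[c, d], continuous f}, {within `[c, d], continuous G} &
      forall x, c < x < d -> [/\ derivable f x 1, derivable G x 1 & `|derive1 f x| <= derive1 G x]].

Lemma derive_majorantS G f c d c' d' : c <= c' -> d' <= d ->
  derive_majorant G f c d -> derive_majorant G f c' d'.
Proof.
move=> cc' d'd [f_cont G_cont f_der].
have sub : `[c', d'] `<=` `[c, d] by apply: subset_itv; rewrite bnd_simp.
split; [exact: continuous_subspaceW f_cont|exact: continuous_subspaceW G_cont|].
by move=> x /andP[c'x xd']; apply: f_der; apply/andP; split; lra.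
Qed.

Lemma derive_majorant_ndecr G f c d : derive_majorant G f c d ->
  (forall x y, c <= x -> x <= y -> y <= d -> G x + f x <= G y + f y) /\
  (forall x y, c <= x -> x <= y -> y <= d -> G x - f x <= G y - f y).
Proof.
move=> [f_cont G_cont f_der].
have der x : x \in `]c, d[ -> [/\ derivable f x 1, derivable G x 1 & `|derive1 f x| <= derive1 G x].
  by rewrite in_itv /=; exact: f_der.
split; apply: ger0_derive1_ndecr.
- by move=> x /der[fx Gx _]; apply: derivableD.
- move=> x /der[/derivableP fx /derivableP Gx].
  rewrite (derive1_val (is_deriveD Gx fx)) -!derive1E ler_norml.
  by case/andP; lra.
- by move=> x; apply: continuousD; [exact: G_cont|exact: f_cont].
- by move=> x /der[fx Gx _]; apply: derivableB.
- move=> x /der[/derivableP fx /derivableP Gx].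
  rewrite (derive1_val (is_deriveB Gx fx)) -!derive1E ler_norml.
  by case/andP; lra.
- by move=> x; apply: continuousB; [exact: G_cont|exact: f_cont].
Qed.

Lemma norm_ibp_moment_le_majorant G f c d k : c <= d -> derive_majorant G f c d ->
  (k <= c -> `|ibp_moment f c d k| <= ibp_moment G c d k) /\
  (d <= k -> `|ibp_moment f c d k| <= - ibp_moment G c d k).
Proof.
move=> cd maj; have [f_cont G_cont _] := maj.
have [ndecrD ndecrB] := derive_majorant_ndecr maj.
have addC : {within `[c, d], continuous (fun x => G x + f x)}.
  by move=> x; apply: continuousD; [exact: G_cont|exact: f_cont].
have subC : {within `[c, d], continuous (fun x => G x - f x)}.
  by move=> x; apply: continuousB; [exact: G_cont|exact: f_cont].
have [D_ge0 D_le0] := ibp_moment_ndecr k cd addC ndecrD.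
have [B_ge0 B_le0] := ibp_moment_ndecr k cd subC ndecrB.
rewrite ibp_momentD // in D_ge0 D_le0; rewrite ibp_momentB // in B_ge0 B_le0.
by split=> k_bd; rewrite ler_norml; apply/andP; split;
  [have := D_ge0 k_bd| have := B_ge0 k_bd| have := D_le0 k_bd| have := B_le0 k_bd]; lra.
Qed.

Lemma norm_ibp_moment_le_majorant_split G f c d k : c <= k <= d ->
  derive_majorant G f c d ->
  `|ibp_moment f c d k| <= - ibp_moment G c k k + ibp_moment G k d k.
Proof.
move=> /andP[ck kd] maj; have [f_cont _ _] := maj.
rewrite (ibp_moment_split _ f_cont); last by rewrite ck kd.
apply: le_trans (ler_normD _ _) _; apply: lerD.
- by case: (norm_ibp_moment_le_majorant k ck (derive_majorantS (lexx c) kd maj)) => _; apply.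
- by case: (norm_ibp_moment_le_majorant k kd (derive_majorantS ck (lexx d) maj)) => h _; apply: h.
Qed.
End IntegrationByPartsMoment.

Lemma Rintegral_continuous_FTC {R : realType} (f F : R -> R) (c d : R) : c <= d ->
  continuous f -> continuous F -> (forall x, c < x < d -> is_derive x 1 F (f x)) ->
  \int[lebesgue_measure]_(x in `[c, d]) f x = F d - F c.
Proof.
move=> cd f_cont F_cont F_der.
have [<-|c_neq_d] := eqVneq c d; first by rewrite set_itv1 Rintegral_set1 subrr.
have c_lt_d : c < d by rewrite lt_neqAle c_neq_d cd.
rewrite /Rintegral (@continuous_FTC2 _ f F c d c_lt_d) //=.
- exact: continuous_subspaceT.
- split; first by move=> x; rewrite in_itv /= => /F_der [].
  + by apply: cvg_at_right_filter; exact: F_cont.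
  + by apply: cvg_at_left_filter; exact: F_cont.
- by move=> x; rewrite in_itv /= => /F_der/derive1_val.
Qed.

(* [lin_moment vc vd vk = \int_vc^vd (v - vk) dv] *)
Definition lin_moment {R : realType} (vc vd vk : R) : R :=
  (vd - vk) * vd - (vc - vk) * vc - (vd ^+ 2 - vc ^+ 2) / 2.

Section SConvexBound.
Context {R : realType}.
Variables s A B : R.
Hypothesis s_gt0 : 0 < s.
Implicit Types v vc vd vk : R.

Definition sconv_bound v := (1 - v) `^ s * A + v `^ s * B.

Lemma sconv_bound_ge0 v : 0 <= A -> 0 <= B -> 0 <= sconv_bound v.
Proof. by move=> A0 B0; rewrite addr_ge0 // mulr_ge0 // powR_ge0. Qed.

Definition sconv_prim1 v :=
  (ppow (s + 1) v * B - ppow (s + 1) (1 - v) * A) / (s + 1).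

Definition sconv_prim2 v :=
  (ppow (s + 2) v * B + ppow (s + 2) (1 - v) * A) / ((s + 1) * (s + 2)).

Let s1_gt0 : 0 < s + 1. Proof. by rewrite addr_gt0. Qed.
Let s2_gt0 : 0 < s + 2. Proof. by rewrite addr_gt0. Qed.

Lemma is_derive_sconv_prim1 v : 0 < v < 1 -> is_derive v 1 sconv_prim1 (sconv_bound v).
Proof.
move=> /andP[v0 v1]; have d1 := is_derive_ppow (s + 1) v0.
have d2 := is_derive_ppowB1 (s + 1) v1.
rewrite /sconv_prim1 /sconv_bound; apply: is_derive_eq.
by rewrite addrK !scaler0 !add0r /GRing.scale /=; field_nz.
Qed.

Lemma is_derive_sconv_prim2 v : 0 < v < 1 -> is_derive v 1 sconv_prim2 (sconv_prim1 v).
Proof.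
move=> /andP[v0 v1]; have d1 := is_derive_ppow (s + 2) v0.
have d2 := is_derive_ppowB1 (s + 2) v1.
rewrite /sconv_prim2 /sconv_prim1; apply: is_derive_eq.
have -> : s + 2 - 1 = s + 1 by ring.
by rewrite !ppowE ?subr_ge0 ?(ltW v0) ?(ltW v1) // !scaler0 !add0r /GRing.scale /=; field_nz.
Qed.

Lemma continuous_sconv_prim1 : continuous sconv_prim1.
Proof.
move=> v; apply: cvgM; last exact: cvg_cst.
apply: cvgB; apply: cvgM; try exact: cvg_cst.
- exact: continuous_ppow.
- exact: continuous_ppowB1.
Qed.

Lemma continuous_sconv_prim2 : continuous sconv_prim2.
Proof.
move=> v; apply: cvgM; last exact: cvg_cst.
apply: cvgD; apply: cvgM; try exact: cvg_cst.
- exact: continuous_ppow.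
- exact: continuous_ppowB1.
Qed.

(* [sconv_moment vc vd vk = \int_vc^vd (v - vk) sconv_bound v dv], integrated by parts *)
Definition sconv_moment vc vd vk :=
  (vd - vk) * sconv_prim1 vd - (vc - vk) * sconv_prim1 vc - sconv_prim2 vd + sconv_prim2 vc.

End SConvexBound.

Section ComparisonFunction.
Context {R : realType}.
Variables a b s A B : R.
Hypotheses (ab : a < b) (s_gt0 : 0 < s).
Implicit Types x v vc vd vk : R.

Definition rescale x := (x - a) / (b - a).
Definition lerp v := a + v * (b - a).

Let ba_gt0 : 0 < b - a. Proof. by rewrite subr_gt0. Qed.

Lemma lerpK v : rescale (lerp v) = v.
Proof. by rewrite /rescale /lerp; field_nz. Qed.

Lemma lerp0 : lerp 0 = a. Proof. by rewrite /lerp mul0r addr0. Qed.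
Lemma lerp1 : lerp 1 = b. Proof. by rewrite /lerp mul1r subrKC. Qed.

Lemma ler_lerp : {mono lerp : v w / v <= w}.
Proof. by move=> v w; rewrite /lerp lerD2l ler_pM2r. Qed.

Lemma rescale_itv x : a < x < b -> 0 < rescale x < 1.
Proof.
by move=> /andP[ax xb]; rewrite /rescale divr_gt0 ?ltr_pdivrMr ?subr_gt0 //=; lra.
Qed.

Definition comparison (K0 K1 x : R) := K0 * x + K1 * (b - a) * sconv_prim1 s A B (rescale x).

Definition comparison_prim (K0 K1 x : R) :=
  K0 * (x ^+ 2 / 2) + K1 * (b - a) ^+ 2 * sconv_prim2 s A B (rescale x).

Lemma is_derive_rescale_comp (F : R -> R) x dF : is_derive (rescale x) 1 F dF ->
  is_derive x 1 (fun y => F (rescale y)) (dF / (b - a)).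
Proof.
move=> F_der; have resc : is_derive x 1 rescale (b - a)^-1.
  by rewrite /rescale; apply: is_derive_eq; rewrite /GRing.scale /=; ring.
by have := is_derive1_comp F_der resc.
Qed.

Lemma is_derive_comparison (K0 K1 x : R) : a < x < b ->
  is_derive x 1 (comparison K0 K1) (K0 + K1 * sconv_bound s A B (rescale x)).
Proof.
move=> /rescale_itv/(is_derive_sconv_prim1 A B s_gt0)/is_derive_rescale_comp d.
rewrite /comparison; apply: is_derive_eq.
by rewrite ?scaler0 ?add0r /GRing.scale /=; field_nz.
Qed.

Lemma is_derive_comparison_prim (K0 K1 x : R) : a < x < b ->
  is_derive x 1 (comparison_prim K0 K1) (comparison K0 K1 x).
Proof.
move=> /rescale_itv/(is_derive_sconv_prim2 A B s_gt0)/is_derive_rescale_comp d.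
rewrite /comparison_prim /comparison; apply: is_derive_eq.
by rewrite ?scaler0 ?add0r /GRing.scale /= expr2; field_nz.
Qed.

Lemma continuous_rescale_comp (F : R -> R) : continuous F -> continuous (fun x => F (rescale x)).
Proof.
move=> F_cont x; apply: (@continuous_comp _ _ _ rescale F); last exact: F_cont.
by apply: cvgM; [apply: cvgB; [exact: cvg_id|exact: cvg_cst]|exact: cvg_cst].
Qed.

Lemma continuous_comparison (K0 K1 : R) : continuous (comparison K0 K1).
Proof.
move=> x; apply: cvgD; apply: cvgM; try exact: cvg_cst; first exact: cvg_id.
exact/continuous_rescale_comp/continuous_sconv_prim1.
Qed.

Lemma continuous_comparison_prim (K0 K1 : R) : continuous (comparison_prim K0 K1).
Proof.
move=> x; apply: cvgD; apply: cvgM; try exact: cvg_cst.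
- by apply: cvgM; [apply: cvgM; exact: cvg_id|exact: cvg_cst].
- exact/continuous_rescale_comp/continuous_sconv_prim2.
Qed.

Lemma ibp_moment_comparison (K0 K1 : R) vc vd vk : 0 <= vc -> vc <= vd -> vd <= 1 ->
  ibp_moment (comparison K0 K1) (lerp vc) (lerp vd) (lerp vk) =
  (b - a) ^+ 2 * (K0 * lin_moment vc vd vk + K1 * sconv_moment s A B vc vd vk).
Proof.
move=> vc0 vcd vd1.
have der x : lerp vc < x < lerp vd -> is_derive x 1 (comparison_prim K0 K1) (comparison K0 K1 x).
  move=> /andP[cx xd]; apply: is_derive_comparison_prim; apply/andP; split.
  + by apply: le_lt_trans cx; rewrite -{1}lerp0 ler_lerp.
  + by apply: lt_le_trans xd _; rewrite -lerp1 ler_lerp.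
have cd : lerp vc <= lerp vd by rewrite ler_lerp.
rewrite /ibp_moment (Rintegral_continuous_FTC cd (@continuous_comparison K0 K1)
  (@continuous_comparison_prim K0 K1) der).
by rewrite /comparison /comparison_prim /lin_moment /sconv_moment !lerpK /lerp; field_nz.
Qed.

End ComparisonFunction.

Lemma lin_moment_ge0 {R : realType} (vc vd vk : R) : vk <= vc -> vc <= vd ->
  0 <= lin_moment vc vd vk.
Proof. by move=> kc cd; rewrite /lin_moment; nra. Qed.

Lemma lin_moment_le0 {R : realType} (vc vd vk : R) : vc <= vd -> vd <= vk ->
  lin_moment vc vd vk <= 0.
Proof. by move=> cd dk; rewrite /lin_moment; nra. Qed.

Section MomentIdentities.
Context {R : realType}.
Variables al lam s A B : R.
Hypotheses (al01 : 0 <= al <= 1) (lam01 : 0 <= lam <= 1) (s_gt0 : 0 < s).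

Let s1_gt0 : 0 < s + 1. Proof. by rewrite addr_gt0. Qed.
Let s2_gt0 : 0 < s + 2. Proof. by rewrite addr_gt0. Qed.

Lemma powRS2 v : 0 <= v -> v `^ (s + 2) = v * v `^ (s + 1).
Proof. by move=> v0; rewrite -(mulr_powRB1 v0 s2_gt0); congr (_ * _ `^ _); ring. Qed.

Lemma moments_left_inner :
  - lin_moment 0 (al * lam) (al * lam) + lin_moment (al * lam) (1 - al) (al * lam) = gamma2 al lam /\
  - sconv_moment s A B 0 (al * lam) (al * lam) + sconv_moment s A B (al * lam) (1 - al) (al * lam)
  = c1 al lam s * B + c2 al lam s * A.
Proof.
case/andP: al01 lam01 => al0 al1 /andP[lam0 lam1].
split; first by rewrite /lin_moment /gamma2 /gamma1; field_nz.
rewrite /sconv_moment /sconv_prim1 /sconv_prim2 /c1 /c2 !subr0 !ppow0 // !ppow1.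
rewrite !ppowE ?subKr ?powRS2; try nra.
by field_nz.
Qed.

Lemma moments_left_outer :
  - lin_moment 0 (1 - al) (al * lam) = gamma1 al lam /\
  - sconv_moment s A B 0 (1 - al) (al * lam) = c3 al lam s * B + c4 al lam s * A.
Proof.
case/andP: al01 lam01 => al0 al1 /andP[lam0 lam1].
split; first by rewrite /lin_moment /gamma1; field_nz.
rewrite /sconv_moment /sconv_prim1 /sconv_prim2 /c3 /c4 !subr0 !ppow0 // !ppow1 !subKr.
rewrite !ppowE ?powRS2; try nra.
by field_nz.
Qed.

Lemma moments_right_inner :
  - lin_moment (1 - al) (1 - (1 - al) * lam) (1 - (1 - al) * lam)
  + lin_moment (1 - (1 - al) * lam) 1 (1 - (1 - al) * lam) = gamma2 (1 - al) lam /\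
  - sconv_moment s A B (1 - al) (1 - (1 - al) * lam) (1 - (1 - al) * lam)
  + sconv_moment s A B (1 - (1 - al) * lam) 1 (1 - (1 - al) * lam)
  = c2 (1 - al) lam s * B + c1 (1 - al) lam s * A.
Proof.
case/andP: al01 lam01 => al0 al1 /andP[lam0 lam1].
split; first by rewrite /lin_moment /gamma2 /gamma1; field_nz.
rewrite /sconv_moment /sconv_prim1 /sconv_prim2 /c1 /c2 !subrr !ppow0 // !ppow1 !subKr.
rewrite !ppowE ?powRS2; try nra.
by field_nz.
Qed.

Lemma moments_right_outer :
  lin_moment (1 - al) 1 (1 - (1 - al) * lam) = gamma1 (1 - al) lam /\
  sconv_moment s A B (1 - al) 1 (1 - (1 - al) * lam) = c4 (1 - al) lam s * B + c3 (1 - al) lam s * A.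
Proof.
case/andP: al01 lam01 => al0 al1 /andP[lam0 lam1].
split; first by rewrite /lin_moment /gamma1; field_nz.
rewrite /sconv_moment /sconv_prim1 /sconv_prim2 /c3 /c4 !subrr !ppow0 // !ppow1 !subKr.
rewrite !ppowE ?powRS2; try nra.
by field_nz.
Qed.

End MomentIdentities.

Section Estimate.
Context {R : realType}.
Variables (f : R -> R) (a b s q A B : R).
Hypotheses (ab : a < b) (s_gt0 : 0 < s) (q_ge1 : 1 <= q) (A_ge0 : 0 <= A) (B_ge0 : 0 <= B).
Hypotheses (f_der : {in `[a, b], forall x, derivable f x 1})
  (f'_bound : {in `[a, b], forall x,
     `|derive1 f x| <= sconv_bound s A B (rescale a b x) `^ q^-1}).

Let f_cont : {within `[a, b], continuous f} := derivable_within_continuous f_der.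

Let e := 1 - q^-1.
Let ba_gt0 : 0 < b - a. Proof. by rewrite subr_gt0. Qed.
Let q_inv01 : 0 < q^-1 <= 1.
Proof.
have q_gt0 : 0 < q by exact: lt_le_trans q_ge1.
by rewrite invr_gt0 q_gt0 invf_le1.
Qed.

Lemma comparison_majorant M : 0 < M ->
  derive_majorant (comparison a b s A B (e * M `^ q^-1) (q^-1 * M `^ (q^-1 - 1))) f a b.
Proof.
move=> M0; split; [exact: f_cont|exact/continuous_subspaceT/continuous_comparison|].
move=> x x_ab; have x_ab' : x \in `[a, b] by case/andP: x_ab => ? ?; rewrite in_itv /= !ltW.
have G'x := is_derive_comparison A B ab s_gt0 (e * M `^ q^-1) (q^-1 * M `^ (q^-1 - 1)) x_ab.
split; [exact: f_der|by case: G'x|rewrite (derive1_val G'x)].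
apply: le_trans (f'_bound x_ab') _.
by apply: powR_le_tangent => //; exact: sconv_bound_ge0.
Qed.

Lemma norm_ibp_moment_le_geomean vc vd vk : 0 <= vc -> vc <= vd -> vd <= 1 ->
  let E := ibp_moment f (lerp a b vc) (lerp a b vd) (lerp a b vk) in
  [/\ vk <= vc -> `|E| <= (b - a) ^+ 2 *
        (lin_moment vc vd vk `^ e * sconv_moment s A B vc vd vk `^ q^-1),
      vd <= vk -> `|E| <= (b - a) ^+ 2 *
        ((- lin_moment vc vd vk) `^ e * (- sconv_moment s A B vc vd vk) `^ q^-1) &
      vc <= vk <= vd -> `|E| <= (b - a) ^+ 2 *
        ((- lin_moment vc vk vk + lin_moment vk vd vk) `^ e
         * (- sconv_moment s A B vc vk vk + sconv_moment s A B vk vd vk) `^ q^-1)].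
Proof.
move=> vc0 vcd vd1 E.
have ba2_gt0 : 0 < (b - a) ^+ 2 by rewrite exprn_gt0.
have geomean_bound G C : 0 <= G -> (forall M, 0 < M -> `|E| <=
    (b - a) ^+ 2 * (e * M `^ q^-1 * G + q^-1 * M `^ (q^-1 - 1) * C)) ->
    `|E| <= (b - a) ^+ 2 * (G `^ e * C `^ q^-1).
  move=> G0 H; rewrite -ler_pdivrMl //; apply: le_geomean_of_tangent_bounds => //.
    by rewrite mulr_ge0 // invr_ge0 (ltW ba2_gt0).
  by move=> M M0; rewrite ler_pdivrMl //; exact: H.
have a_le_c : a <= lerp a b vc by rewrite -{1}(lerp0 a b) ler_lerp.
have d_le_b : lerp a b vd <= b by rewrite -{2}(lerp1 a b) ler_lerp.
have cd : lerp a b vc <= lerp a b vd by rewrite ler_lerp.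
have maj M (M0 : 0 < M) := derive_majorantS a_le_c d_le_b (comparison_majorant M0).
split.
- move=> kc; apply: geomean_bound; first exact: lin_moment_ge0.
  move=> M M0; have [+ _] := norm_ibp_moment_le_majorant (lerp a b vk) cd (maj M M0).
  by rewrite ibp_moment_comparison // ler_lerp //; apply.
- move=> dk; apply: geomean_bound; first by rewrite oppr_ge0; exact: lin_moment_le0.
  move=> M M0; have [_] := norm_ibp_moment_le_majorant (lerp a b vk) cd (maj M M0).
  rewrite ibp_moment_comparison // ler_lerp // => /(_ dk) /le_trans; apply.
  by rewrite le_eqVlt; apply/orP; left; apply/eqP; ring.
- move=> /andP[ck kd]; apply: geomean_bound.
    by rewrite addr_ge0 // ?oppr_ge0; [exact: lin_moment_le0|exact: lin_moment_ge0].
  have ckd : lerp a b vc <= lerp a b vk <= lerp a b vd by rewrite !ler_lerp // ck kd.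
  move=> M M0; have := norm_ibp_moment_le_majorant_split ckd (maj M M0).
  rewrite !ibp_moment_comparison //; try exact: le_trans kd vd1; try exact: le_trans vc0 ck.
  move=> /le_trans; apply.
  by rewrite le_eqVlt; apply/orP; left; apply/eqP; ring.
Qed.

Variables al lam : R.
Hypotheses (al01 : 0 <= al <= 1) (lam01 : 0 <= lam <= 1).

Let al_lam0 : 0 <= al * lam. Proof. by case/andP: al01 lam01 => ? _ /andP[? _]; exact: mulr_ge0. Qed.
Let al'_lam0 : 0 <= (1 - al) * lam. Proof. by case/andP: al01 lam01 => ? ? /andP[? ?]; nra. Qed.
Let al'0 : 0 <= 1 - al. Proof. by case/andP: al01 => _; rewrite subr_ge0. Qed.
Let al'1 : 1 - al <= 1. Proof. by case/andP: al01 => ? _; rewrite lerBlDr lerDl. Qed.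

Lemma I_f_ibp_moments :
  (b - a) * I_f f lam al a b =
  ibp_moment f (lerp a b 0) (lerp a b (1 - al)) (lerp a b (al * lam)) +
  ibp_moment f (lerp a b (1 - al)) (lerp a b 1) (lerp a b (1 - (1 - al) * lam)).
Proof.
have m_ab : a <= lerp a b (1 - al) <= b.
  by rewrite -[X in X <= _ <= _](lerp0 a b) -[X in _ <= _ <= X](lerp1 a b) !ler_lerp // al'0 al'1.
rewrite /I_f (_ : al * a + (1 - al) * b = lerp a b (1 - al)); last by rewrite /lerp; ring.
rewrite /ibp_moment (Rintegral_itv_split m_ab f_cont) lerp0 lerp1.
by rewrite /lerp; field_nz.
Qed.

Lemma left_moment_bound_inner : al * lam <= 1 - al ->
  `|ibp_moment f (lerp a b 0) (lerp a b (1 - al)) (lerp a b (al * lam))| <= (b - a) ^+ 2 *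
    (gamma2 al lam `^ e * (c1 al lam s * B + c2 al lam s * A) `^ q^-1).
Proof.
move=> p_le_m; have [_ _ +] := norm_ibp_moment_le_geomean (al * lam) (lexx 0) al'0 al'1.
have [-> ->] := moments_left_inner A B al01 lam01 s_gt0.
by apply; rewrite al_lam0 p_le_m.
Qed.

Lemma left_moment_bound_outer : 1 - al <= al * lam ->
  `|ibp_moment f (lerp a b 0) (lerp a b (1 - al)) (lerp a b (al * lam))| <= (b - a) ^+ 2 *
    (gamma1 al lam `^ e * (c3 al lam s * B + c4 al lam s * A) `^ q^-1).
Proof.
move=> m_le_p; have [_ + _] := norm_ibp_moment_le_geomean (al * lam) (lexx 0) al'0 al'1.
by have [<- <-] := moments_left_outer A B al01 lam01 s_gt0; apply.
Qed.

Lemma right_moment_bound_inner : 1 - al <= 1 - (1 - al) * lam ->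
  `|ibp_moment f (lerp a b (1 - al)) (lerp a b 1) (lerp a b (1 - (1 - al) * lam))| <=
    (b - a) ^+ 2 * (gamma2 (1 - al) lam `^ e *
      (c2 (1 - al) lam s * B + c1 (1 - al) lam s * A) `^ q^-1).
Proof.
move=> m_le_r; have [_ _ +] := norm_ibp_moment_le_geomean (1 - (1 - al) * lam) al'0 al'1 (lexx 1).
have [-> ->] := moments_right_inner A B al01 lam01 s_gt0.
by apply; rewrite m_le_r lerBlDr lerDl al'_lam0.
Qed.

Lemma right_moment_bound_outer : 1 - (1 - al) * lam <= 1 - al ->
  `|ibp_moment f (lerp a b (1 - al)) (lerp a b 1) (lerp a b (1 - (1 - al) * lam))| <=
    (b - a) ^+ 2 * (gamma1 (1 - al) lam `^ e *
      (c4 (1 - al) lam s * B + c3 (1 - al) lam s * A) `^ q^-1).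
Proof.
move=> r_le_m; have [+ _ _] := norm_ibp_moment_le_geomean (1 - (1 - al) * lam) al'0 al'1 (lexx 1).
by have [<- <-] := moments_right_outer A B al01 lam01 s_gt0; apply.
Qed.

End Estimate.

Lemma norm_le_of_split_bounds {R : realType} (D I E1 E2 U1 U2 : R) : 0 < D ->
  D * I = E1 + E2 -> `|E1| <= D ^+ 2 * U1 -> `|E2| <= D ^+ 2 * U2 ->
  `|I| <= D * (U1 + U2).
Proof.
move=> D0 DI E1U1 E2U2; rewrite -(ler_pM2l D0) -(ger0_norm (ltW D0)) -normrM DI.
apply: le_trans (ler_normD _ _) _; rewrite ger0_norm ?(ltW D0) // mulrA -expr2 mulrDr.
exact: lerD.
Qed.

Lemma interior_itvcc {R : realType} (I : set R) (a b : R) : is_interval I ->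
  interior I a -> interior I b -> `[a, b] `<=` interior I.
Proof.
move=> I_itv aI bI x; rewrite /= in_itv /= => /andP[ax xb].
have [<-//|a_neq_x] := eqVneq a x; have [->//|x_neq_b] := eqVneq x b.
have ab_sub : `]a, b[ `<=` I.
  move=> z; rewrite /= in_itv /= => /andP[az zb].
  by apply: (I_itv a b (interior_subset aI) (interior_subset bI)); rewrite !ltW.
apply: (filterS ab_sub); apply: open_nbhs_nbhs; split; first exact: interval_open.
by rewrite /= in_itv /= !lt_neqAle a_neq_x x_neq_b ax xb.
Qed.

Lemma s_convex_on_le_bound {R : realType} (s a b : R) (g : R -> R) x : a < b ->
  s_convex_on s a b g -> a <= x <= b -> g x <= sconv_bound s (g a) (g b) (rescale a b x).
Proof.
move=> ab [_ g_sconv] /andP[ax xb].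
have u0 : 0 <= rescale a b x by rewrite /rescale divr_ge0 // subr_ge0 // ltW.
have u1 : rescale a b x <= 1 by rewrite /rescale ler_pdivrMr ?subr_gt0 // mul1r lerB.
have := g_sconv a b (1 - rescale a b x); rewrite subKr.
have -> : (1 - rescale a b x) * a + rescale a b x * b = x by rewrite /rescale; field_nz.
by apply; rewrite ?lexx ?(ltW ab) //; apply/andP; split; lra.
Qed.

Lemma s_convex_powR_norm_le {R : realType} (s q a b : R) (h : R -> R) x : a < b -> 0 < q ->
  s_convex_on s a b (fun y => `|h y| `^ q) -> a <= x <= b ->
  `|h x| <= sconv_bound s (`|h a| `^ q) (`|h b| `^ q) (rescale a b x) `^ q^-1.
Proof.
move=> ab q_gt0 h_sconv x_ab.
rewrite -[X in X <= _](powRr1 (normr_ge0 _)) -(mulfV (lt0r_neq0 q_gt0)) powRrM.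
apply: ge0_ler_powR; rewrite ?nnegrE ?invr_ge0 ?powR_ge0 ?(ltW q_gt0) //.
  by rewrite sconv_bound_ge0 // powR_ge0.
exact: (s_convex_on_le_bound ab h_sconv).
Qed.

Theorem theorem2p2 (R : realType) (I : set R) (f : R -> R) (a b al lam s q : R) :
  is_interval I ->
  (forall x, interior I x -> derivable f x 1) ->
  interior I a -> interior I b -> a < b ->
  lebesgue_measure.-integrable `[a, b] (EFin \o (derive1 f)) ->
  0 <= al <= 1 -> 0 <= lam <= 1 ->
  0 < s <= 1 -> 1 <= q ->
  s_convex_on s a b (fun x => `|(derive1 f) x| `^ q) ->
  let A := `|(derive1 f) a| `^ q in
  let B := `|(derive1 f) b| `^ q in
  let e := 1 - q^-1 in
  (al * lam <= 1 - al <= 1 - lam * (1 - al) ->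
     `|I_f f lam al a b| <= (b - a) *
       (gamma2 al lam `^ e * (c1 al lam s * B + c2 al lam s * A) `^ q^-1
        + gamma2 (1 - al) lam `^ e
          * (c2 (1 - al) lam s * B + c1 (1 - al) lam s * A) `^ q^-1)) /\
  (al * lam <= 1 - lam * (1 - al) <= 1 - al ->
     `|I_f f lam al a b| <= (b - a) *
       (gamma2 al lam `^ e * (c1 al lam s * B + c2 al lam s * A) `^ q^-1
        + gamma1 (1 - al) lam `^ e
          * (c4 (1 - al) lam s * B + c3 (1 - al) lam s * A) `^ q^-1)) /\
  (1 - al <= al * lam <= 1 - lam * (1 - al) ->
     `|I_f f lam al a b| <= (b - a) *
       (gamma1 al lam `^ e * (c3 al lam s * B + c4 al lam s * A) `^ q^-1
        + gamma2 (1 - al) lam `^ e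
          * (c2 (1 - al) lam s * B + c1 (1 - al) lam s * A) `^ q^-1)).
Proof.
move=> I_itv f_der_I aI bI ab _ al01 lam01 /andP[s_gt0 _] q_ge1 f'_sconv A B e.
have f_der : {in `[a, b], forall x, derivable f x 1}.
  by move=> x x_ab; apply/f_der_I/(interior_itvcc I_itv aI bI).
have f'_bound : {in `[a, b], forall x,
    `|derive1 f x| <= sconv_bound s A B (rescale a b x) `^ q^-1}.
  move=> x; rewrite in_itv /=; exact: s_convex_powR_norm_le ab (lt_le_trans ltr01 q_ge1) f'_sconv.
have [A0 B0] : 0 <= A /\ 0 <= B by split; exact: powR_ge0.
have ba_gt0 : 0 < b - a by rewrite subr_gt0.
have /(norm_le_of_split_bounds ba_gt0) split := I_f_ibp_moments ab f_der lam al01.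
have Lin := left_moment_bound_inner ab s_gt0 q_ge1 A0 B0 f_der f'_bound al01 lam01.
have Lout := left_moment_bound_outer ab s_gt0 q_ge1 A0 B0 f_der f'_bound al01 lam01.
have Rin := right_moment_bound_inner ab s_gt0 q_ge1 A0 B0 f_der f'_bound al01 lam01.
have Rout := right_moment_bound_outer ab s_gt0 q_ge1 A0 B0 f_der f'_bound al01 lam01.
split; [|split] => /andP[h1 h2]; apply: split.
- by apply: Lin; lra.
- by apply: Rin; lra.
- by apply: Lin; lra.
- by apply: Rout; lra.
- by apply: Lout; lra.
- by apply: Rin; lra.
Qed.
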